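(* Let $\lambda=(n_1,n_2)$ be a two-row shape with $n_1\ge n_2\ge 2$, and let $\rho$ be a density on $\lambda$ with positive entries $\rho_{1,j}=a_j$ ($1\le j\le n_1$) and $\rho_{2,j}=b_j$ ($1\le j\le n_2$). Let $\lambda'=(n_1-1,n_2-1)$ and, for $0\le i\le b_1$, let $\rho'_i$ be the density on $\lambda'$ with first row $(a_2,a_3,\dots,a_{n_1})$ and second row $(b_1+b_2-i,\,b_3,\dots,b_{n_2})$. Then $$|\mathrm{SVT}(\lambda,\rho)|=\sum_{i=0}^{b_1}\binom{a_2+i-1}{i}\,|\mathrm{SVT}(\lambda',\rho'_i)|.$$
   Context: A density on a shape $\lambda$ is an assignment of a nonnegative integer $\rho_{i,j}$ to every cell $(i,j)$ (row $i$, column $j$); let $N=\sum\rho_{i,j}$. A standard set-valued Young tableau of shape $\lambda$ and density $\rho$ assigns to each cell $(i,j)$ a set $S_{i,j}$ with $|S_{i,j}|=\rho_{i,j}$, the sets partitioning $[N]$, such that every element of $S_{i,j}$ is smaller than every element of $S_{i,j+1}$ and of $S_{i+1,j}$ whenever those cells exist. $\mathrm{SVT}(\lambda,\rho)$ is the set of these tableaux. *)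

From mathcomp Require Import all_boot.
Set Implicit Arguments. Unset Strict Implicit. Unset Printing Implicit Defensive.

(* Conventions (0-indexed internally): a shape is a partition given as the
   sequence of its row lengths [lam]; cell (i,j) lies in the shape iff
   i < size lam and j < nth 0 lam i.  A density is rho : nat -> nat -> nat,
   rho i j being the density of cell (i,j) (values outside the shape are
   irrelevant). *)

Definition in_shape (lam : seq nat) (i j : nat) : bool :=
  (i < size lam) && (j < nth 0 lam i).

Definition svt_N (lam : seq nat) (rho : nat -> nat -> nat) : nat :=
  \sum_(i < size lam) \sum_(j < nth 0 lam i) rho i j.

Definition max_row (lam : seq nat) : nat := foldr maxn 0 lam.

(* A standard set-valued tableau is encoded by the map f : [N] -> cells
   sending each number k to the unique cell (i,j) with k \in S_{i,j}.
   (Numbers 1..N are represented by 'I_N, i.e. 0..N-1, which does not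
   affect the order conditions.) *)
Definition cell_t (lam : seq nat) := ('I_(size lam) * 'I_(max_row lam))%type.

Definition is_svt (lam : seq nat) (rho : nat -> nat -> nat)
    (f : {ffun 'I_(svt_N lam rho) -> cell_t lam}) : bool :=
  [&& [forall x, in_shape lam (val (f x).1) (val (f x).2)],
      [forall c : cell_t lam, in_shape lam (val c.1) (val c.2) ==>
          (#|[pred x | f x == c]| == rho (val c.1) (val c.2))],
      [forall x, forall y,
          ((val (f y).1 == val (f x).1) && (val (f y).2 == (val (f x).2).+1))
            ==> (val x < val y)] &
      [forall x, forall y,
          ((val (f y).1 == (val (f x).1).+1) && (val (f y).2 == val (f x).2))
            ==> (val x < val y)]].

Definition svt_count (lam : seq nat) (rho : nat -> nat -> nat) : nat :=
  #|[pred f | @is_svt lam rho f]|.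

(* Read a tableau as the word of the cells holding 1, 2, ..., N.  Such a word
   is valid iff its first letter is a cell of positive density whose left and
   upper neighbours are empty, and the rest is valid for the density
   decremented there; so |SVT| is a sum over the cells that can hold 1.
   For two rows with positive densities the a_1 smallest entries are forced
   into cell (1,1).  Then, writing h(x,y) for the count with x entries left in
   (1,2) and y in (2,1), h(x+1,y) = h(x,y) + [y>0] h(x+1,y-1), which expands
   h(a_2,b_1) as sum_i C(a_2-1+i, i) h(0,b_1-i).  Once (1,1) and (1,2) are
   empty, the cells (2,1) and (2,2) are filled one after the other with no
   other constraint, so they merge into one cell of the shape without its
   first column. *)

From mathcomp Require Import all_boot zify.
Set Implicit Arguments. Unset Strict Implicit. Unset Printing Implicit Defensive.

(** * Counting words *)

Fixpoint count_words (T : finType) (n : nat) (P : pred (seq T)) : nat :=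
  if n is n'.+1 then \sum_(c : T) count_words n' (fun w => P (c :: w)) else P [::].

Lemma eq_count_words (T : finType) n (P Q : pred (seq T)) :
  P =1 Q -> count_words n P = count_words n Q.
Proof.
elim: n P Q => [|n IH] P Q /= eqPQ; first by rewrite eqPQ.
by apply: eq_bigr => c _; apply: IH => w; apply: eqPQ.
Qed.

Lemma count_words_andb (T : finType) n b (P : pred (seq T)) :
  count_words n (fun w => b && P w) = b * count_words n P.
Proof.
elim: n P => [|n IH] P /=; first by case: b; case: (P [::]).
by rewrite big_distrr; apply: eq_bigr => c _; apply: IH.
Qed.

Lemma card_codom_ffun (T : finType) n (P : pred (seq T)) :
  #|[pred f : {ffun 'I_n -> T} | P (codom f)]| = count_words n P.
Proof.
elim: n P => [|n IH] P.
  rewrite -sum1_card big_mkcond /= (eq_bigr (fun=> nat_of_bool (P [::]))).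
    by rewrite sum_nat_const card_ffun card_ord expn0 mul1n.
  by move=> f _; rewrite inE codomE enum_ord0.
pose cons_ffun (p : T * {ffun 'I_n -> T}) : {ffun 'I_n.+1 -> T} :=
  [ffun i => if unlift ord0 i is Some j then p.2 j else p.1].
have cons_ffun_bij : bijective cons_ffun.
  exists (fun f : {ffun 'I_n.+1 -> T} => (f ord0, [ffun j => f (lift ord0 j)])).
    case=> c q; rewrite /= ffunE unlift_none; congr pair.
    by apply/ffunP => j; rewrite !ffunE liftK.
  move=> f; apply/ffunP => i; rewrite !ffunE /=.
  by case: unliftP => [j ->|->]; rewrite ?ffunE.
rewrite -sum1_card big_mkcond (reindex cons_ffun (onW_bij _ cons_ffun_bij)) /=.
rewrite -(pair_bigA _ (fun c q =>
  if cons_ffun (c, q) \in [pred f : {ffun 'I_n.+1 -> T} | P (codom f)] then 1 else 0)) /=.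
apply: congr_big => // c _; rewrite -IH -sum1_card [RHS]big_mkcond /=.
apply: eq_bigr => q _; rewrite !inE !codomE enum_ordSl /= ffunE unlift_none -map_comp.
by congr (if P (c :: _) then _ else _); apply: eq_map => j /=; rewrite ffunE liftK.
Qed.

Lemma pairwise_map_enum_ord (T : Type) (R : rel T) n (f : 'I_n -> T) :
  irreflexive R ->
  pairwise (fun c d => ~~ R d c) [seq f i | i <- enum 'I_n] =
  [forall x, forall y, R (f x) (f y) ==> (x < y)].
Proof.
move=> irrR; elim: n f => [|n IH] f.
  by rewrite enum_ord0; apply/esym/forallP => -[].
rewrite enum_ordSl map_cons pairwise_cons -map_comp IH all_map.
apply/andP/forallP => [[/allP first_min /forallP rest] x | ord_f]; last first.
  split.
    apply/allP => x _ /=; apply/negP => Rx.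
    by have := implyP (forallP (ord_f (lift ord0 x)) ord0) Rx.
  apply/forallP => x; apply/forallP => y; apply/implyP => Rxy.
  by have := implyP (forallP (ord_f (lift ord0 x)) (lift ord0 y)) Rxy; rewrite !lift0.
apply/forallP => y; apply/implyP => Rxy.
case: (unliftP ord0 x) Rxy => [x' ->|->]; case: (unliftP ord0 y) => [y' ->|->] Rxy.
- by rewrite !lift0 ltnS; apply: (implyP (forallP (rest x') y')).
- by rewrite (negbTE (first_min x' (mem_enum _ x'))) in Rxy.
- by rewrite lift0.
- by rewrite irrR in Rxy.
Qed.

(** * Tableaux as words *)

Section Words.

Variables (lam : seq nat) (rho : nat -> nat -> nat).

Definition cell_in (c : cell_t lam) : bool := in_shape lam (val c.1) (val c.2).

Definition cell_density (c : cell_t lam) : nat := rho (val c.1) (val c.2).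

Definition next_cell (c d : cell_t lam) : bool :=
  ((val d.1 == val c.1) && (val d.2 == (val c.2).+1)) ||
  ((val d.1 == (val c.1).+1) && (val d.2 == val c.2)).

Lemma next_cell_irr : irreflexive next_cell.
Proof. by move=> c; rewrite /next_cell !eqxx andbT !(ltn_eqF (ltnSn _)). Qed.

Definition svt_word (s : seq (cell_t lam)) : bool :=
  [&& all cell_in s,
      [forall c, cell_in c ==> (count_mem c s == cell_density c)] &
      pairwise (fun c d => ~~ next_cell d c) s].

Lemma is_svt_word f : @is_svt lam rho f = svt_word (codom f).
Proof.
rewrite /is_svt /svt_word codomE (pairwise_map_enum_ord _ next_cell_irr) all_map.
congr [&& _, _ & _].
- apply/forallP/allP => [in_f x _ | in_f x]; [exact: in_f | exact: in_f x (mem_enum _ x)].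
- by apply: eq_forallb => c; rewrite count_map -sum1_count big_enum_cond -sum1_card.
apply/andP/forallP => [[/forallP right /forallP down] x | ordered].
  apply/forallP => y; apply/implyP => /orP[] xy.
    exact: implyP (forallP (right x) y) xy.
  exact: implyP (forallP (down x) y) xy.
by split; apply/forallP => x; apply/forallP => y; apply/implyP => xy;
  apply: (implyP (forallP (ordered x) y)); rewrite /next_cell xy ?orbT.
Qed.

Lemma svt_count_words : svt_count lam rho = count_words (svt_N lam rho) svt_word.
Proof. by rewrite -card_codom_ffun; apply: eq_card => f; rewrite !inE is_svt_word. Qed.

End Words.

Definition upd_density (rho : nat -> nat -> nat) (r c v : nat) : nat -> nat -> nat :=
  fun i j => if (i == r) && (j == c) then v else rho i j.

Definition dec_density (rho : nat -> nat -> nat) (r c : nat) := upd_density rho r c (rho r c).-1.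

Definition minimal_cell (lam : seq nat) (rho : nat -> nat -> nat) (i j : nat) : bool :=
  [&& 0 < rho i j,
      (j == 0) || ~~ in_shape lam i j.-1 || (rho i j.-1 == 0) &
      (i == 0) || ~~ in_shape lam i.-1 j || (rho i.-1 j == 0)].

Section FirstCell.

Variables (lam : seq nat) (rho : nat -> nat -> nat).

Lemma cell_density_dec (c d : cell_t lam) :
  cell_density (dec_density rho (val c.1) (val c.2)) d =
  if d == c then (cell_density rho c).-1 else cell_density rho d.
Proof.
rewrite /cell_density /dec_density /upd_density; case: (eqVneq d c) => [-> | neq_dc].
  by rewrite !eqxx.
case: ifP => // /andP[/eqP eq1 /eqP eq2]; case/eqP: neq_dc.
by case: d c eq1 eq2 => [d1 d2] [c1 c2] /= /val_inj -> /val_inj ->.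
Qed.

Lemma svt_word_cons (c : cell_t lam) w :
  svt_word rho (c :: w) =
  [&& cell_in c, 0 < cell_density rho c,
      [forall d, cell_in d && (0 < cell_density rho d) ==> ~~ next_cell d c] &
      svt_word (dec_density rho (val c.1) (val c.2)) w].
Proof.
rewrite {1}/svt_word pairwise_cons /=.
have count_dec d : cell_in d ->
    (count_mem d (c :: w) == cell_density rho d) =
    (count_mem d w == cell_density (dec_density rho (val c.1) (val c.2)) d) &&
    ((d == c) ==> (0 < cell_density rho d)).
  move=> _; rewrite cell_density_dec /= (eq_sym c d).
  case: (eqVneq d c) => [->|_]; last by rewrite add0n andbT.
  by case: (cell_density rho c) => [|n]; rewrite add1n ?eqSS ?andbT ?andbF.
apply/idP/idP.
- case/and4P => /andP[c_in w_in] /forallP counts all_c w_ord.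
  have c_pos : 0 < cell_density rho c.
    by have := implyP (counts c) c_in; rewrite count_dec // eqxx => /andP[_].
  rewrite c_in c_pos /=; apply/andP; split.
    apply/forallP => d; apply/implyP => /andP[d_in d_pos].
    have [-> | neq_dc] := eqVneq d c; first by rewrite next_cell_irr.
    have := implyP (counts d) d_in; rewrite /= (eq_sym c d) (negbTE neq_dc) add0n => /eqP cnt.
    have : d \in w by rewrite -has_pred1 has_count cnt.
    exact: (allP all_c).
  rewrite /svt_word w_in w_ord andbT /=; apply/forallP => d; apply/implyP => d_in.
  by have := implyP (counts d) d_in; rewrite count_dec // => /andP[].
- case/and4P => c_in c_pos /forallP c_first /and3P[w_in /forallP counts w_ord].
  rewrite c_in w_in w_ord /= andbT; apply/andP; split.
    apply/forallP => d; apply/implyP => d_in.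
    rewrite count_dec // (implyP (counts d) d_in) /=.
    by apply/implyP => /eqP->.
  apply/allP => d d_w; have d_in := allP w_in d d_w.
  have [-> | neq_dc] := eqVneq d c; first by rewrite next_cell_irr.
  apply: (implyP (c_first d)); rewrite d_in /=.
  have := implyP (counts d) d_in; rewrite cell_density_dec (negbTE neq_dc) => /eqP <-.
  by rewrite -has_count has_pred1.
Qed.

Lemma first_cellE (c : cell_t lam) :
  [forall d, cell_in d && (0 < cell_density rho d) ==> ~~ next_cell d c] =
  ((val c.2 == 0) || ~~ in_shape lam (val c.1) (val c.2).-1 ||
     (rho (val c.1) (val c.2).-1 == 0)) &&
  ((val c.1 == 0) || ~~ in_shape lam (val c.1).-1 (val c.2) ||
     (rho (val c.1).-1 (val c.2) == 0)).
Proof.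
case: c => [[i lt_i] [j lt_j]] /=.
apply/forallP/andP => [first | [left up] [[i' lt_i'] [j' lt_j']]]; last first.
  apply/implyP => /andP[in_d pos_d]; apply/negP; rewrite /cell_in /cell_density /= in in_d pos_d.
  rewrite /next_cell /= => /orP[] /andP[/eqP eq_i /eqP eq_j]; move: left up;
    by rewrite eq_i eq_j /= in_d (gtn_eqF pos_d) ?andbF.
have below_ord k n (lt_k : k < n) : k.-1 < n := leq_ltn_trans (leq_pred k) lt_k.
split.
  have [-> // | pos_j] := posnP j; rewrite /=.
  case in_l: (in_shape lam i j.-1) => //=; rewrite eqn0Ngt; apply/negP => pos_l.
  have := implyP (first (Ordinal lt_i, Ordinal (below_ord _ _ lt_j))).
  by rewrite /cell_in /cell_density /= in_l pos_l /next_cell /= prednK // !eqxx => /(_ isT).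
have [-> // | pos_i] := posnP i; rewrite /=.
case in_u: (in_shape lam i.-1 j) => //=; rewrite eqn0Ngt; apply/negP => pos_u.
have := implyP (first (Ordinal (below_ord _ _ lt_i), Ordinal lt_j)).
by rewrite /cell_in /cell_density /= in_u pos_u /next_cell /= prednK // !eqxx orbT => /(_ isT).
Qed.

Lemma svt_word_consE (c : cell_t lam) w :
  svt_word rho (c :: w) =
  cell_in c && minimal_cell lam rho (val c.1) (val c.2) &&
  svt_word (dec_density rho (val c.1) (val c.2)) w.
Proof. by rewrite svt_word_cons first_cellE /minimal_cell -!andbA. Qed.

End FirstCell.

Lemma eq_in_svt_count lam (rho sig : nat -> nat -> nat) :
  (forall i j, in_shape lam i j -> rho i j = sig i j) ->
  svt_count lam rho = svt_count lam sig.
Proof.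
move=> eq_rs; rewrite !svt_count_words.
have -> : svt_N lam rho = svt_N lam sig.
  by apply: eq_bigr => i _; apply: eq_bigr => j _; rewrite eq_rs // /in_shape !ltn_ord.
apply: eq_count_words => s; rewrite /svt_word; congr [&& _, _ & _].
apply: eq_forallb => c; rewrite /cell_density.
by case in_c: (cell_in c); rewrite //= eq_rs.
Qed.

Lemma nth_leq_max_row lam i : nth 0 lam i <= max_row lam.
Proof.
elim: lam i => [|x l IH] [|i] //=; first exact: leq_maxl.
exact: leq_trans (IH i) (leq_maxr _ _).
Qed.

Lemma svt_count0 lam rho : svt_N lam rho = 0 -> svt_count lam rho = 1.
Proof.
move=> N0; rewrite svt_count_words N0 /svt_word /= andbT.
move/eqP: N0; rewrite sum_nat_eq0 => /forall_inP empty_rows.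
suff -> : [forall c : cell_t lam, cell_in c ==> (0 == cell_density rho c)] by [].
apply/forallP => c; apply/implyP => /andP[_ lt_c2].
have := empty_rows c.1 isT; rewrite sum_nat_eq0 => /forall_inP /(_ (Ordinal lt_c2) isT).
by rewrite eq_sym.
Qed.

Lemma svt_N_dec lam rho i j : in_shape lam i j -> 0 < rho i j ->
  svt_N lam rho = (svt_N lam (dec_density rho i j)).+1.
Proof.
case/andP => lt_i lt_j pos_ij.
rewrite /svt_N (bigD1 (Ordinal lt_i)) //= [in RHS](bigD1 (Ordinal lt_i)) //=.
rewrite (bigD1 (Ordinal lt_j)) //= [in RHS](bigD1 (Ordinal lt_j)) //=.
rewrite /dec_density /upd_density !eqxx /= -!addSn prednK //.
congr (_ + _ + _); apply: eq_bigr => k neq_k.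
  by have /negbTE-> : nat_of_ord k != j := neq_k.
by have /negbTE-> : nat_of_ord k != i := neq_k.
Qed.

Definition svt_count_at lam rho i j : nat :=
  if minimal_cell lam rho i j then svt_count lam (dec_density rho i j) else 0.

Lemma svt_countE lam rho : 0 < svt_N lam rho ->
  svt_count lam rho = \sum_(i < size lam) \sum_(j < nth 0 lam i) svt_count_at lam rho i j.
Proof.
rewrite svt_count_words; case N_rho: (svt_N lam rho) => [|n] // _ /=.
transitivity (\sum_(c : cell_t lam)
   (cell_in c && minimal_cell lam rho c.1 c.2) * svt_count lam (dec_density rho c.1 c.2)).
  apply: eq_bigr => c _; rewrite (eq_count_words _ (svt_word_consE rho c)) count_words_andb.
  case/boolP: (cell_in c && _) => [/andP[in_c /and3P[pos_c _ _]] | _]; last by rewrite !mul0n.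
  rewrite svt_count_words; congr (_ * count_words _ _).
  by apply/eqP; rewrite -eqSS -N_rho (svt_N_dec in_c pos_c).
rewrite -(pair_bigA _ (fun (i : 'I_(size lam)) (j : 'I_(max_row lam)) =>
  (cell_in (i, j) && minimal_cell lam rho i j) * svt_count lam (dec_density rho i j))) /=.
apply: eq_bigr => i _.
rewrite (big_ord_widen _ (svt_count_at lam rho i) (nth_leq_max_row lam i)) [RHS]big_mkcond.
apply: eq_bigr => j _; rewrite /svt_count_at /cell_in /in_shape /= ltn_ord.
by case: (j < nth 0 lam i); case: minimal_cell; rewrite ?mul1n ?mul0n.
Qed.

Lemma svt_count_at_min lam rho i j : minimal_cell lam rho i j ->
  svt_count_at lam rho i j = svt_count lam (dec_density rho i j).
Proof. by rewrite /svt_count_at => ->. Qed.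

Lemma svt_count_at_nmin lam rho i j : minimal_cell lam rho i j = false ->
  svt_count_at lam rho i j = 0.
Proof. by rewrite /svt_count_at => ->. Qed.

(** * Two-row shapes *)

Lemma svt_N2 m1 m2 rho :
  svt_N [:: m1; m2] rho = \sum_(j < m1) rho 0 j + \sum_(j < m2) rho 1 j.
Proof. by rewrite /svt_N /= !big_ord_recl big_ord0 addn0. Qed.

Lemma svt_count2E m1 m2 rho : 0 < svt_N [:: m1; m2] rho ->
  svt_count [:: m1; m2] rho =
  \sum_(0 <= j < m1) svt_count_at [:: m1; m2] rho 0 j +
  \sum_(0 <= j < m2) svt_count_at [:: m1; m2] rho 1 j.
Proof.
move=> pos_N; rewrite svt_countE; last exact: pos_N.
by rewrite !big_mkord [size _]/= !big_ord_recl big_ord0 addn0.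
Qed.

Lemma minimal_cell_left lam rho i j : 0 < j -> in_shape lam i j.-1 -> 0 < rho i j.-1 ->
  minimal_cell lam rho i j = false.
Proof.
by move=> pos_j in_l pos_l; rewrite /minimal_cell (gtn_eqF pos_j) in_l (gtn_eqF pos_l) andbF.
Qed.

Lemma minimal_cell_up lam rho i j : 0 < i -> in_shape lam i.-1 j -> 0 < rho i.-1 j ->
  minimal_cell lam rho i j = false.
Proof.
by move=> pos_i in_u pos_u; rewrite /minimal_cell (gtn_eqF pos_i) in_u (gtn_eqF pos_u) !andbF.
Qed.

Lemma minimal_cell0 lam rho i j : rho i j = 0 -> minimal_cell lam rho i j = false.
Proof. by move=> rho_ij; rewrite /minimal_cell rho_ij. Qed.

Lemma svt_count_forced_corner m1 m2 rho : m2 <= m1.+1 ->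
    (forall j, 0 < j < m1.+1 -> 0 < rho 0 j) -> (forall j, j < m2 -> 0 < rho 1 j) ->
  svt_count [:: m1.+1; m2] rho = svt_count [:: m1.+1; m2] (upd_density rho 0 0 0).
Proof.
move=> le_m21; move: {2}(rho 0 0) (erefl (rho 0 0)) => k.
elim: k rho => [|k IH] rho rho00 pos_row0 pos_row1.
  apply: eq_in_svt_count => i j _; rewrite /upd_density.
  by case: ifP => // /andP[/eqP-> /eqP->].
have pos_row0' j : j < m1.+1 -> 0 < rho 0 j by case: j => [|j] lt_j; rewrite ?rho00 ?pos_row0.
rewrite svt_count2E; last by rewrite svt_N2 big_ord_recl rho00 addSn.
rewrite (big_nat_recl _ _ _ (leq0n _)) big_nat_cond big1 => [|j /andP[/andP[_ lt_j] _]]; last first.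
  apply/svt_count_at_nmin/minimal_cell_left => //=; first exact: ltnW.
  exact: pos_row0' (ltnW lt_j).
rewrite big_nat_cond big1 ?addn0 => [|j /andP[/andP[_ lt_j] _]]; last first.
  have lt_j1 : j < m1.+1 := leq_trans lt_j le_m21.
  by apply/svt_count_at_nmin/minimal_cell_up => //=; apply: pos_row0'.
have corner_min : minimal_cell [:: m1.+1; m2] rho 0 0 by rewrite /minimal_cell rho00.
rewrite (svt_count_at_min corner_min) IH.
- apply: eq_in_svt_count => i j _; rewrite /upd_density /dec_density /upd_density.
  by case: ifP => // ->.
- by rewrite /dec_density /upd_density rho00.
- move=> j /andP[pos_j lt_j]; rewrite /dec_density /upd_density (gtn_eqF pos_j) andbF.
  by rewrite pos_row0 ?pos_j.
- by move=> j lt_j; rewrite /dec_density /upd_density pos_row1.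
Qed.

Definition first_cells (rho : nat -> nat -> nat) (x y : nat) : nat -> nat -> nat :=
  fun i j => match i, j with 0, 0 => 0 | 0, 1 => x | 1, 0 => y | _, _ => rho i j end.

Lemma svt_count_first_cells_rec m1 m2 rho : m2 <= m1 ->
    (forall j, 1 < j < m1.+2 -> 0 < rho 0 j) ->
  let h x y := svt_count [:: m1.+2; m2.+2] (first_cells rho x y) in
  forall x y, h x.+1 y = h x y + (0 < y) * h x.+1 y.-1.
Proof.
move=> le_m21 pos_row0 h x y; rewrite {}/h.
set sig := first_cells rho x.+1 y.
have pos_sig0 j : 0 < j < m1.+2 -> 0 < sig 0 j.
  by rewrite /sig /first_cells; case: j => [|[|j]] // /andP[_ lt_j]; apply: pos_row0.
have dec_eq i j x' y' : dec_density sig i j =2 first_cells rho x' y' ->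
    svt_count [:: m1.+2; m2.+2] (dec_density sig i j) =
    svt_count [:: m1.+2; m2.+2] (first_cells rho x' y').
  by move=> eq_dec; apply: eq_in_svt_count => i' j' _; apply: eq_dec.
rewrite svt_count2E; last by rewrite svt_N2 2!big_ord_recl -!addnA addnCA ltn_addr.
rewrite 2!(big_nat_recl _ _ _ (leq0n _)) big_nat_cond big1; last first.
  move=> j /andP[/andP[_ lt_j] _]; have lt_j1 : j.+1 < m1.+2 by rewrite ltnS ltnW.
  by apply/svt_count_at_nmin/minimal_cell_left => //; apply: pos_sig0; rewrite lt_j1.
rewrite 2!(big_nat_recl _ _ _ (leq0n _)) big_nat_cond big1; last first.
  move=> j /andP[/andP[_ lt_j] _]; have lt_j2 : j.+2 < m1.+2 by rewrite !ltnS (leq_trans lt_j).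
  by apply/svt_count_at_nmin/minimal_cell_up => //; apply: pos_sig0; rewrite lt_j2.
have min00 : minimal_cell [:: m1.+2; m2.+2] sig 0 0 = false by [].
have min01 : minimal_cell [:: m1.+2; m2.+2] sig 0 1 = true by [].
have min10 : minimal_cell [:: m1.+2; m2.+2] sig 1 0 = (0 < y).
  by rewrite /minimal_cell /= andbT.
have min11 : minimal_cell [:: m1.+2; m2.+2] sig 1 1 = false.
  by rewrite /minimal_cell /= !andbF.
rewrite /svt_count_at min00 min01 min10 min11 !addn0 add0n (dec_eq _ _ x y); last first.
  by case=> [|[|i]] [|[|j]].
rewrite (dec_eq _ _ x.+1 y.-1); first by case: (0 < y); rewrite ?mul1n ?mul0n.
by case=> [|[|i]] [|[|j]].
Qed.

Lemma lattice_path_expansion (h : nat -> nat -> nat) :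
    (forall x y, h x.+1 y = h x y + (0 < y) * h x.+1 y.-1) ->
  forall x y, h x.+1 y = \sum_(0 <= i < y.+1) 'C(x + i, i) * h 0 (y - i).
Proof.
move=> h_rec x y; elim: y x => [|y IHy] x.
  rewrite big_nat1 bin0 mul1n subn0.
  by elim: x => [|x IHx]; rewrite h_rec mul0n addn0.
elim: x => [|x IHx].
  rewrite h_rec mul1n IHy [RHS]big_nat_recl // add0n binn mul1n subn0; congr (_ + _).
  by apply: eq_bigr => i _; rewrite !add0n !binn subSS.
rewrite h_rec mul1n IHx IHy [X in X + _ = _]big_nat_recl // [RHS]big_nat_recl //.
rewrite !bin0 !mul1n !subn0 -addnA; congr (_ + _).
rewrite -big_split /=; apply: eq_bigr => i _.
by rewrite subSS -mulnDl [in RHS]addSn binS !addnS addSn.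
Qed.

(** * Merging the first column *)

Definition merge_first_column (rho : nat -> nat -> nat) : nat -> nat -> nat :=
  fun i j => if (i == 1) && (j == 0) then rho 1 0 + rho 1 1 else rho i j.+1.

(* Without this, an empty cell (1,1) (0-based) would let (1,2) be filled
   before a non-empty (1,0) is exhausted, which the merged cell forbids. *)
Definition mergeable (rho : nat -> nat -> nat) : bool := (rho 1 0 == 0) || (0 < rho 1 1).

Lemma svt_N_merge m1 m2 rho : rho 0 0 = 0 ->
  svt_N [:: m1.+2; m2.+2] rho = svt_N [:: m1.+1; m2.+1] (merge_first_column rho).
Proof.
move=> rho00; rewrite !svt_N2 big_ord_recl rho00 add0n; congr (_ + _).
by rewrite !big_ord_recl addnA.
Qed.

Lemma dec_density_eq0 rho i j k l : rho k l = 0 -> dec_density rho i j k l = 0.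
Proof.
move=> rho_kl; rewrite /dec_density /upd_density.
by case: ifP => // /andP[/eqP ki /eqP lj]; rewrite -ki -lj rho_kl.
Qed.

Lemma merge_dec_density rho i j : ~~ ((i == 1) && (j == 0)) ->
  merge_first_column (dec_density rho i j.+1) =2 dec_density (merge_first_column rho) i j.
Proof.
move=> not_10 k l; rewrite /merge_first_column /dec_density /upd_density !eqSS (negbTE not_10).
have not_10' : (1 == i) && (0 == j) = false by rewrite eq_sym [0 == j]eq_sym (negbTE not_10).
case: ifP => [/andP[/eqP-> /eqP->] | _]; last by case: ifP.
by rewrite not_10' andbF.
Qed.

Lemma merge_dec_first_pair rho j : j <= 1 -> 0 < rho 1 j ->
  merge_first_column (dec_density rho 1 j) =2 dec_density (merge_first_column rho) 1 0.
Proof.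
move=> le_j1 pos_j k l; rewrite /merge_first_column /dec_density /upd_density.
case: ifP => [_ | not_10] /=.
  by case: j le_j1 pos_j => [|[|j]] //= _ pos; lia.
by case: j le_j1 {pos_j} => [|[|j]] //= _; rewrite ?andbF ?eqSS ?not_10.
Qed.

Lemma in_shape2S m1 m2 i j :
  in_shape [:: m1.+1; m2.+1] i j.+1 = in_shape [:: m1; m2] i j.
Proof. by case: i => [|[|i]]. Qed.

Lemma minimal_cell_merge m1 m2 rho i j : mergeable rho ->
  minimal_cell [:: m1.+2; m2.+2] rho i j.+2 =
  minimal_cell [:: m1.+1; m2.+1] (merge_first_column rho) i j.+1.
Proof.
move=> rho_mergeable; rewrite /minimal_cell /= !in_shape2S /merge_first_column !andbF.
congr [&& _, _ & _]; case: ifP => [/andP[/eqP-> /eqP->] | //] /=.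
by case/orP: rho_mergeable => [/eqP-> // | pos11]; rewrite addn_eq0 (gtn_eqF pos11) andbF.
Qed.

Section MergeStep.

Variables (m1 m2 : nat) (rho : nat -> nat -> nat).
Hypotheses (rho00 : rho 0 0 = 0) (rho01 : rho 0 1 = 0) (rho_mergeable : mergeable rho).
(* The induction hypothesis of svt_count_merge_first_column below. *)
Hypothesis merge_dec_count : forall i j i' j',
  in_shape [:: m1.+2; m2.+2] i j -> 0 < rho i j -> mergeable (dec_density rho i j) ->
  merge_first_column (dec_density rho i j) =2 dec_density (merge_first_column rho) i' j' ->
  svt_count [:: m1.+2; m2.+2] (dec_density rho i j) =
  svt_count [:: m1.+1; m2.+1] (dec_density (merge_first_column rho) i' j').

Lemma svt_count_at_merge_shift i j : in_shape [:: m1.+2; m2.+2] i j.+2 ->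
  svt_count_at [:: m1.+2; m2.+2] rho i j.+2 =
  svt_count_at [:: m1.+1; m2.+1] (merge_first_column rho) i j.+1.
Proof.
move=> in_ij; rewrite /svt_count_at -minimal_cell_merge //.
case: ifP => [/and3P[pos_ij _ _] | _]; last by [].
apply: merge_dec_count => //; first by rewrite /mergeable /dec_density /upd_density /= !andbF.
by apply: merge_dec_density; rewrite andbF.
Qed.

Lemma sum_svt_count_at_merge_shift i m : i <= 1 -> m <= nth 0 [:: m1; m2] i ->
  \sum_(0 <= j < m) svt_count_at [:: m1.+2; m2.+2] rho i j.+2 =
  \sum_(0 <= j < m) svt_count_at [:: m1.+1; m2.+1] (merge_first_column rho) i j.+1.
Proof.
move=> le_i1 le_m; apply: eq_big_nat => j /andP[_ lt_j]; apply: svt_count_at_merge_shift.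
by case: i le_i1 le_m => [|[|]] // _ le_m; rewrite /in_shape /= !ltnS (leq_trans lt_j).
Qed.

Lemma svt_count_at_merge_first_pair :
  svt_count_at [:: m1.+2; m2.+2] rho 1 0 + svt_count_at [:: m1.+2; m2.+2] rho 1 1 =
  svt_count_at [:: m1.+1; m2.+1] (merge_first_column rho) 1 0.
Proof.
have min10 : minimal_cell [:: m1.+2; m2.+2] rho 1 0 = (0 < rho 1 0).
  by rewrite /minimal_cell rho00 /= !andbT.
have min11 : minimal_cell [:: m1.+2; m2.+2] rho 1 1 = (0 < rho 1 1) && (rho 1 0 == 0).
  by rewrite /minimal_cell rho01 /= !andbT.
have min10' : minimal_cell [:: m1.+1; m2.+1] (merge_first_column rho) 1 0 =
    (0 < rho 1 0 + rho 1 1) by rewrite /minimal_cell /merge_first_column /= rho01 !andbT.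
rewrite /svt_count_at min10 min11 min10'.
have [rho10 | pos10] := posnP (rho 1 0).
  rewrite rho10 add0n andbT; case: ifP => [pos11 | _]; last by [].
  apply: merge_dec_count => //; first by rewrite /mergeable /dec_density /upd_density /= rho10.
  exact: merge_dec_first_pair.
rewrite andbF addn0 (ltn_addr _ pos10).
apply: merge_dec_count => //; last exact: merge_dec_first_pair.
rewrite /mergeable /dec_density /upd_density /=.
by case/orP: rho_mergeable => [/eqP rho10 | ->]; [rewrite rho10 in pos10 | rewrite orbT].
Qed.

Lemma svt_count_merge_step : 0 < svt_N [:: m1.+2; m2.+2] rho ->
  svt_count [:: m1.+2; m2.+2] rho = svt_count [:: m1.+1; m2.+1] (merge_first_column rho).
Proof.
move=> pos_N; have pos_N' := pos_N; rewrite svt_N_merge // in pos_N'.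
rewrite (svt_count2E pos_N) (svt_count2E pos_N') !(big_nat_recl _ _ _ (leq0n _)).
rewrite (@sum_svt_count_at_merge_shift 0 m1 isT (leqnn _)).
rewrite (@sum_svt_count_at_merge_shift 1 m2 isT (leqnn _)).
rewrite -svt_count_at_merge_first_pair.
rewrite (svt_count_at_nmin (@minimal_cell0 _ _ 0 0 rho00)).
rewrite (svt_count_at_nmin (@minimal_cell0 _ _ 0 1 rho01)).
rewrite (svt_count_at_nmin (@minimal_cell0 _ (merge_first_column rho) 0 0 rho01)).
by rewrite !add0n !addnA.
Qed.

End MergeStep.

Lemma svt_count_merge_first_column m1 m2 rho :
    rho 0 0 = 0 -> rho 0 1 = 0 -> mergeable rho ->
  svt_count [:: m1.+2; m2.+2] rho =
  svt_count [:: m1.+1; m2.+1] (merge_first_column rho).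
Proof.
move: {2}(svt_N _ rho) (erefl (svt_N [:: m1.+2; m2.+2] rho)) => n.
elim: n rho => [|n IH] rho N_rho rho00 rho01 rho_mergeable.
  by rewrite !svt_count0 -?svt_N_merge.
apply: svt_count_merge_step => //; last by rewrite N_rho.
move=> i j i' j' in_ij pos_ij dec_mergeable eq_merge; rewrite IH.
- by apply: eq_in_svt_count => k l _; apply: eq_merge.
- by apply/eqP; rewrite -eqSS -N_rho (svt_N_dec in_ij pos_ij).
- exact: dec_density_eq0.
- exact: dec_density_eq0.
- exact: dec_mergeable.
Qed.

Lemma svt_count_two_rows m1 m2 rho : m2 <= m1 ->
    (forall j, j < m1.+2 -> 0 < rho 0 j) -> (forall j, j < m2.+2 -> 0 < rho 1 j) ->
  svt_count [:: m1.+2; m2.+2] rho =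
  \sum_(0 <= i < (rho 1 0).+1) 'C((rho 0 1).-1 + i, i) *
    svt_count [:: m1.+1; m2.+1]
      (fun r j => if r == 0 then rho 0 j.+1
                  else if j == 0 then rho 1 0 + rho 1 1 - i else rho 1 j.+1).
Proof.
move=> le_m21 pos_row0 pos_row1.
have pos_row0' j : 0 < j < m1.+2 -> 0 < rho 0 j by case/andP=> _; apply: pos_row0.
rewrite svt_count_forced_corner; [| by rewrite !ltnS | exact: pos_row0' | exact: pos_row1].
pose h x y := svt_count [:: m1.+2; m2.+2] (first_cells rho x y).
have -> : svt_count [:: m1.+2; m2.+2] (upd_density rho 0 0 0) = h (rho 0 1).-1.+1 (rho 1 0).
  by apply: eq_in_svt_count; rewrite prednK ?pos_row0 // => -[|[|i]] [|[|j]].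
have h_rec : forall x y, h x.+1 y = h x y + (0 < y) * h x.+1 y.-1.
  apply: svt_count_first_cells_rec => // j /andP[lt_1j lt_j].
  by rewrite pos_row0' // (ltn_trans _ lt_1j).
rewrite (lattice_path_expansion h_rec); apply: eq_big_nat => i /andP[_ le_i]; congr (_ * _).
rewrite /h svt_count_merge_first_column; last 3 first.
- by [].
- by [].
- by rewrite /mergeable /= pos_row1 ?orbT.
rewrite [RHS]svt_count_forced_corner.
- apply: eq_in_svt_count => -[|[|r]] [|j] //= _.
  by rewrite /merge_first_column /upd_density /= addnBAC.
- by rewrite ltnS.
- by move=> j /andP[_ lt_j]; apply: pos_row0.
- move=> [|j] lt_j /=; last exact: pos_row1.
  by rewrite -addnBAC // ltn_addl // pos_row1.
Qed.

Unset Implicit Arguments.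

Theorem theorem6 (n1 n2 : nat) (a b : nat -> nat)
  (Hn2 : 2 <= n2) (Hn : n2 <= n1)
  (Ha : forall j, 1 <= j <= n1 -> 0 < a j)
  (Hb : forall j, 1 <= j <= n2 -> 0 < b j) :
  svt_count [:: n1; n2] (fun i j => if i == 0 then a j.+1 else b j.+1) =
  \sum_(0 <= i < (b 1).+1)
     'C(a 2 + i - 1, i) *
     svt_count [:: n1.-1; n2.-1]
       (fun r j => if r == 0 then a j.+2
                   else if j == 0 then b 1 + b 2 - i else b j.+2).
Proof.
have [m1 n1E] : exists m1, n1 = m1.+2.
  by exists (n1 - 2); rewrite -addn2 subnK // (leq_trans Hn2 Hn).
have [m2 n2E] : exists m2, n2 = m2.+2 by exists (n2 - 2); rewrite -addn2 subnK.
subst n1 n2; have pos_a2 : 0 < a 2 by apply: Ha.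
rewrite svt_count_two_rows; last 3 first.
- by rewrite -2!ltnS.
- by move=> j lt_j; apply: Ha.
- by move=> j lt_j; apply: Hb.
by apply: eq_big_nat => i _; rewrite -subn1 addnBAC.
Qed.
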